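(* Let $s$ be an integer with $|s|\ge 3$, and let $F_s(t)= t^4 + (4s^3 - 4s^2 + 8s - 4)t^3 + (-6s^2 - 6)t^2 + 4t + 1$. Then $F_s$ has four real roots $r_1,r_2,r_3,r_4$ satisfying $$r_1=-4s^3+4s^2-8s+4-\tfrac32 s^{-1}-\tfrac32 s^{-2}+\theta_1 s^{-4},\quad 1\le\theta_1\le 2,$$ $$r_2=\frac{1+\sqrt3}{2}s^{-1}+\frac{3+\sqrt3}{6}s^{-2}-\frac{1}{3\sqrt3}s^{-3}+\theta_2 s^{-4},\quad -\tfrac32\le\theta_2\le-\tfrac12,$$ $$r_3=\tfrac12 s^{-1}+\tfrac12 s^{-2}-\theta_3 s^{-4},\quad 0\le\theta_3\le 1,$$ $$r_4=\frac{1-\sqrt3}{2}s^{-1}+\frac{3-\sqrt3}{6}s^{-2}+\frac{1}{3\sqrt3}s^{-3}+\theta_4 s^{-4},\quad -\tfrac12\le\theta_4\le\tfrac12,$$ for suitable real numbers $\theta_1,\theta_2,\theta_3,\theta_4$ (depending on $s$). *)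

From Stdlib Require Import Reals ZArith.
Open Scope R_scope.

Definition Fs (s t : R) : R :=
  t ^ 4 + (4 * s ^ 3 - 4 * s ^ 2 + 8 * s - 4) * t ^ 3
  + (- 6 * s ^ 2 - 6) * t ^ 2 + 4 * t + 1.

From Stdlib Require Import Reals ZArith Lra List.
Import ListNotations.
Open Scope R_scope.

(* The three small roots come from the intermediate value theorem in theta.  At each
   endpoint theta of the interval for theta_i, s^16 F_s(r_i(theta)) is a polynomial of
   degree 13 in s whose coefficients in the basis (s+3)^k (s-3)^(13-k) all have one sign;
   hence its sign is constant on |s| >= 3, and it is opposite at the two endpoints.  These
   coefficients lie in Q(sqrt 3).  The large root is then forced by Vieta,
   r1 = -(4s^3 - 4s^2 + 8s - 4) - r2 - r3 - r4, i.e. theta1 = theta3 - theta2 - theta4,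
   which lies in [1, 2] once the small roots are located in the sharper intervals
   theta2 in [-3/4, -1/2], theta3 in [1/3, 2/3], theta4 in [-1/2, -1/6]. *)

Lemma Rabs_ge3_neq0 (x : R) : 3 <= Rabs x -> x <> 0.
Proof. intros hx ->. rewrite Rabs_R0 in hx. lra. Qed.

Fixpoint bern (c : list R) (X Y : R) : R :=
  match c with
  | [] => 0
  | c0 :: l => c0 * Y ^ length l + X * bern l X Y
  end.

Lemma bern_pos (c : list R) (X Y : R) :
  Forall (Rlt 0) c -> c <> [] -> 0 <= X -> 0 <= Y -> 0 < X + Y -> 0 < bern c X Y.
Proof.
  intros Hc; induction Hc as [|c0 l Hc0 Hl IH]; intros Hne HX HY HXY; [congruence|].
  cbn [bern]. destruct l as [|c1 l]; [cbn; lra|].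
  assert (Hb : 0 < bern (c1 :: l) X Y) by (apply IH; auto; discriminate).
  assert (HYn : 0 <= Y ^ length (c1 :: l)) by (apply pow_le; lra).
  destruct (Rle_lt_or_eq_dec 0 X HX) as [HX0|HX0].
  - nra.
  - subst X. assert (0 < Y ^ length (c1 :: l)) by (apply pow_lt; lra). nra.
Qed.

Lemma bern_opp (c : list R) (X Y : R) :
  bern c (- X) (- Y) = (-1) ^ pred (length c) * bern c X Y.
Proof.
  induction c as [|c0 l IH]; cbn [bern]; [ring|].
  destruct l as [|c1 l]; [cbn; ring|].
  rewrite IH. cbn [length pred].
  replace (- Y) with (-1 * Y) by ring. rewrite Rpow_mult_distr. cbn [pow]. ring.
Qed.

Definition sqrt3_val (w : R) (p : R * R) : R := fst p + w * snd p.

Lemma bern_map_sqrt3_val (w : R) (c : list (R * R)) (X Y : R) :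
  bern (map (sqrt3_val w) c) X Y = bern (map fst c) X Y + w * bern (map snd c) X Y.
Proof.
  induction c as [|p l IH]; cbn [map bern]; [ring|].
  rewrite !length_map, IH. unfold sqrt3_val. ring.
Qed.

Lemma bern_map_opp (c : list R) (X Y : R) : bern (map Ropp c) X Y = - bern c X Y.
Proof.
  induction c as [|c0 l IH]; cbn [map bern]; [ring|].
  rewrite length_map, IH. ring.
Qed.

Lemma bern_shift_pos (c : list R) (x : R) :
  Forall (Rlt 0) c -> c <> [] -> 3 <= Rabs x ->
  0 < x ^ pred (length c) * bern c (x + 3) (x - 3).
Proof.
  intros Hc Hne hx. set (n := pred (length c)).
  destruct (Rle_lt_dec 0 x) as [Hx|Hx].
  - rewrite Rabs_right in hx by lra.
    apply Rmult_lt_0_compat; [apply pow_lt; lra | apply bern_pos; auto; lra].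
  - rewrite Rabs_left in hx by lra.
    replace (x + 3) with (- (- x - 3)) by ring. replace (x - 3) with (- (3 - x)) by ring.
    rewrite bern_opp. fold n.
    replace (x ^ n) with ((-1) ^ n * (- x) ^ n)
      by (rewrite <- Rpow_mult_distr; f_equal; ring).
    assert (Hsq : (-1) ^ n * (-1) ^ n = 1)
      by (rewrite <- Rpow_mult_distr; replace (-1 * -1) with 1 by ring; apply pow1).
    assert (0 < (- x) ^ n) by (apply pow_lt; lra).
    assert (0 < bern c (- x - 3) (3 - x)) by (apply bern_pos; auto; lra).
    replace ((-1) ^ n * (- x) ^ n * ((-1) ^ n * bern c (- x - 3) (3 - x)))
      with ((-1) ^ n * (-1) ^ n * ((- x) ^ n * bern c (- x - 3) (3 - x))) by ring.
    rewrite Hsq. nra.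
Qed.

Lemma sign_change_of_certificates (x K L f g : R) (c d : list R) :
  3 <= Rabs x -> K * L < 0 ->
  Forall (Rlt 0) c -> Forall (Rlt 0) d -> c <> [] -> d <> [] -> length c = length d ->
  K * (x ^ 16 * f) = bern c (x + 3) (x - 3) ->
  L * (x ^ 16 * g) = bern d (x + 3) (x - 3) ->
  f * g < 0.
Proof.
  intros hx HKL Hc Hd Hc0 Hd0 Hlen Ef Eg.
  pose proof (bern_shift_pos c x Hc Hc0 hx) as Pc.
  pose proof (bern_shift_pos d x Hd Hd0 hx) as Pd.
  rewrite <- Ef in Pc. rewrite <- Hlen, <- Eg in Pd.
  set (n := pred (length c)) in *.
  assert (Hz : 0 < (x ^ n * x ^ 16) * (x ^ n * x ^ 16)).
  { apply Rsqr_pos_lt, Rmult_integral_contrapositive.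
    split; apply pow_nonzero, Rabs_ge3_neq0, hx. }
  assert (Hprod : 0 < (K * L) * ((x ^ n * x ^ 16) * (x ^ n * x ^ 16)) * (f * g)).
  { replace ((K * L) * ((x ^ n * x ^ 16) * (x ^ n * x ^ 16)) * (f * g))
      with (x ^ n * (K * (x ^ 16 * f)) * (x ^ n * (L * (x ^ 16 * g)))) by ring.
    apply Rmult_lt_0_compat; assumption. }
  set (z := (x ^ n * x ^ 16) * (x ^ n * x ^ 16)) in *.
  assert (K * L * z < 0) by nra.
  nra.
Qed.

Lemma root_of_certificates (x lo hi K L : R) (e : R -> R) (c d : list R) :
  K * (x ^ 16 * Fs x (e lo)) = bern c (x + 3) (x - 3) ->
  L * (x ^ 16 * Fs x (e hi)) = bern d (x + 3) (x - 3) ->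
  3 <= Rabs x -> lo <= hi -> continuity e -> K * L < 0 ->
  Forall (Rlt 0) c -> Forall (Rlt 0) d -> c <> [] -> d <> [] -> length c = length d ->
  exists th, lo <= th <= hi /\ Fs x (e th) = 0.
Proof.
  intros Elo Ehi hx Hlohi He HKL Hc Hd Hc0 Hd0 Hlen.
  assert (Hcont : continuity (fun th => Fs x (e th))) by (unfold Fs; reg).
  assert (Hsign : Fs x (e lo) * Fs x (e hi) <= 0).
  { left. exact (sign_change_of_certificates x K L _ _ c d hx HKL Hc Hd Hc0 Hd0 Hlen Elo Ehi). }
  destruct (IVT_cor _ lo hi Hcont Hlohi Hsign) as [th Hth]. exists th. exact Hth.
Qed.

Definition Fs_re (x a b : R) : R :=
  (a ^ 4 + 18 * a ^ 2 * b ^ 2 + 9 * b ^ 4)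
  + (4 * x ^ 3 - 4 * x ^ 2 + 8 * x - 4) * (a ^ 3 + 9 * a * b ^ 2)
  + (- 6 * x ^ 2 - 6) * (a ^ 2 + 3 * b ^ 2) + 4 * a + 1.

Definition Fs_im (x a b : R) : R :=
  (4 * a ^ 3 * b + 12 * a * b ^ 3)
  + (4 * x ^ 3 - 4 * x ^ 2 + 8 * x - 4) * (3 * a ^ 2 * b + 3 * b ^ 3)
  + (- 6 * x ^ 2 - 6) * (2 * a * b) + 4 * b.

Lemma Fs_sqrt3 (x a b w : R) :
  w * w = 3 -> Fs x (a + w * b) = Fs_re x a b + w * Fs_im x a b.
Proof.
  intros hw.
  assert (E : Fs x (a + w * b) = Fs_re x a b + w * Fs_im x a b + (w * w - 3) *
    (6 * a ^ 2 * b ^ 2 + 4 * a * w * b ^ 3 + (w * w + 3) * b ^ 4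
     + (4 * x ^ 3 - 4 * x ^ 2 + 8 * x - 4) * (3 * a * b ^ 2 + w * b ^ 3)
     + (- 6 * x ^ 2 - 6) * b ^ 2))
    by (unfold Fs, Fs_re, Fs_im; ring).
  rewrite E, hw. ring.
Qed.

(* [approx2 x (sqrt 3) th] is the expansion of [r2] and [approx2 x (- sqrt 3) th] that of [r4],
   since [1 / (3 * sqrt 3) = sqrt 3 / 9]. *)
Definition approx2 (x w th : R) : R :=
  (1 + w) / 2 * / x + (3 + w) / 6 * / x ^ 2 - w / 9 * / x ^ 3 + th * / x ^ 4.

Definition approx2_re (x th : R) : R := 1 / 2 * / x + 1 / 2 * / x ^ 2 + th * / x ^ 4.

Definition approx2_im (x : R) : R := 1 / 2 * / x + 1 / 6 * / x ^ 2 - 1 / 9 * / x ^ 3.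

Definition approx3 (x th : R) : R := 1 / 2 * / x + 1 / 2 * / x ^ 2 - th * / x ^ 4.

Lemma approx2_split (x w th : R) : approx2 x w th = approx2_re x th + w * approx2_im x.
Proof. unfold approx2, approx2_re, approx2_im. lra. Qed.

Lemma Fs_approx2_certificate (x w th K : R) (c : list (R * R)) :
  w * w = 3 ->
  K * (x ^ 16 * Fs_re x (approx2_re x th) (approx2_im x)) = bern (map fst c) (x + 3) (x - 3) ->
  K * (x ^ 16 * Fs_im x (approx2_re x th) (approx2_im x)) = bern (map snd c) (x + 3) (x - 3) ->
  K * (x ^ 16 * Fs x (approx2 x w th)) = bern (map (sqrt3_val w) c) (x + 3) (x - 3).
Proof.
  intros hw Ere Eim.
  rewrite approx2_split, Fs_sqrt3, bern_map_sqrt3_val, <- Ere, <- Eim by exact hw. ring.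
Qed.

(* Coefficients of [K * x^16 * Fs x (approx _ th)] in the basis [(x+3)^k (x-3)^(13-k)],
   normalized to be positive; a pair [(a, b)] stands for [a + b sqrt 3]. *)
Definition cert_r2_lo : list (R * R) :=
  [(8929668505, -3235527120);
   (106787455531, -42398702016);
   (585963261150, -251688337056);
   (1961547047986, -903225849600);
   (4492785153043, -2197808284848);
   (7477497698337, -3841530533568);
   (9354903958548, -4970396631744);
   (8947662245676, -4823172357120);
   (6561034988463, -3511063813680);
   (3645507999293, -1894176211776);
   (1490392675886, -736402150560);
   (423677669250, -195482836224);
   (74872540037, -31787093328);
   (6196157591, -2395348032)].

Definition cert_mid : list (R * R) :=
  [(-151810585, 210619640);
   (-1524306835, 2693399632);
   (-6594484830, 15799157856);
   (-15769947778, 56434733456);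
   (-21577437139, 137194457944);
   (-13409306937, 239930153280);
   (6453277164, 310673731968);
   (21151581300, 301613681952);
   (19965844305, 219568467240);
   (9817786795, 118399651024);
   (2128291666, 45979951136);
   (-230513106, 12179777616);
   (-223717445, 1972479112);
   (-35256575, 147467936)].

Definition cert_r3_lo : list R :=
  [20162305;
   373621559;
   2866811154;
   12635388650;
   36467441824;
   73648610676;
   107866257648;
   116569870104;
   93267399933;
   54691596563;
   22880827798;
   6472781094;
   1110157258;
   87181082].

Definition cert_r3_hi : list R :=
  [137231426;
   1590216346;
   8467020390;
   27461164198;
   60614172971;
   96339709629;
   113720177208;
   101241446640;
   68212188972;
   34493741776;
   12788618378;
   3310849410;
   539578943;
   41991361].

Definition cert_r4_hi : list (R * R) :=
  [(3507911279, 1873152680);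
   (48083049013, 23993723984);
   (300993112146, 141317943552);
   (1139978350510, 506867744464);
   (2916455477189, 1235604964840);
   (5326552479519, 2162810522880);
   (7151702699532, 2798572360512);
   (7154905283988, 2712887677344);
   (5340053160585, 1972541240568);
   (2940321697699, 1064020862032);
   (1162490981762, 414530514880);
   (312910873566, 110625532560);
   (51456098147, 18149607032);
   (3907714537, 1383720800)].

Lemma Fs_approx2_lo (x w : R) : x <> 0 -> w * w = 3 ->
  -30091839012864 * (x ^ 16 * Fs x (approx2 x w (-3/4)))
  = bern (map (sqrt3_val w) cert_r2_lo) (x + 3) (x - 3).
Proof.
  intros hx hw. apply Fs_approx2_certificate; [exact hw| |];
    cbn [cert_r2_lo map fst snd bern length]; unfold Fs_re, Fs_im, approx2_re, approx2_im;
    field; exact hx.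
Qed.

Lemma Fs_approx2_mid (x w : R) : x <> 0 -> w * w = 3 ->
  1880739938304 * (x ^ 16 * Fs x (approx2 x w (-1/2)))
  = bern (map (sqrt3_val w) cert_mid) (x + 3) (x - 3).
Proof.
  intros hx hw. apply Fs_approx2_certificate; [exact hw| |];
    cbn [cert_mid map fst snd bern length]; unfold Fs_re, Fs_im, approx2_re, approx2_im;
    field; exact hx.
Qed.

Lemma Fs_approx2_r4_hi (x w : R) : x <> 0 -> w * w = 3 ->
  16926659444736 * (x ^ 16 * Fs x (approx2 x w (-1/6)))
  = bern (map (sqrt3_val w) cert_r4_hi) (x + 3) (x - 3).
Proof.
  intros hx hw. apply Fs_approx2_certificate; [exact hw| |];
    cbn [cert_r4_hi map fst snd bern length]; unfold Fs_re, Fs_im, approx2_re, approx2_im;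
    field; exact hx.
Qed.

Lemma Fs_approx3_lo (x : R) : x <> 0 ->
  -1057916215296 * (x ^ 16 * Fs x (approx3 x (1/3))) = bern cert_r3_lo (x + 3) (x - 3).
Proof.
  intros hx. cbn [cert_r3_lo bern length]. unfold Fs, approx3. field. exact hx.
Qed.

Lemma Fs_approx3_hi (x : R) : x <> 0 ->
  1057916215296 * (x ^ 16 * Fs x (approx3 x (2/3))) = bern cert_r3_hi (x + 3) (x - 3).
Proof.
  intros hx. cbn [cert_r3_hi bern length]. unfold Fs, approx3. field. exact hx.
Qed.

Ltac coefficients_pos :=
  try unfold sqrt3_val; cbn [fst snd];
  repeat (apply Forall_cons; [lra|]); apply Forall_nil.

Lemma inv_bound (x : R) : 3 <= Rabs x -> -1/3 <= / x <= 1/3.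
Proof.
  intros hx.
  pose proof (Rinv_r x (Rabs_ge3_neq0 x hx)) as Hinv.
  destruct (Rle_lt_dec 0 x) as [H|H].
  - rewrite Rabs_right in hx by lra. nra.
  - rewrite Rabs_left in hx by lra. nra.
Qed.

Lemma scaled_neq (y a b u v : R) :
  y <> 0 -> -1/3 <= y <= 1/3 -> -1 <= u <= 1 -> -1 <= v <= 1 -> 2/3 < a - b ->
  y * (a + y * u) <> y * (b + y * v).
Proof.
  intros Hy0 Hy Hu Hv Hab E.
  apply Rmult_eq_reg_l in E; [|exact Hy0].
  assert (a - b = y * (v - u)) by lra. nra.
Qed.

Lemma approx2_factor (x w th : R) : x <> 0 ->
  approx2 x w th = / x * ((1 + w) / 2 + / x * ((3 + w) / 6 - w / 9 * / x + th * (/ x) ^ 2)).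
Proof. intros hx. unfold approx2. field. exact hx. Qed.

Lemma approx3_factor (x th : R) : x <> 0 ->
  approx3 x th = / x * (1 / 2 + / x * (1 / 2 - th * (/ x) ^ 2)).
Proof. intros hx. unfold approx3. field. exact hx. Qed.

Section Roots.

Variables x w : R.
Hypothesis hx : 3 <= Rabs x.
Hypothesis hw : w * w = 3.
Hypothesis hw_lo : 17320508 / 10000000 < w.
Hypothesis hw_hi : w < 17320509 / 10000000.

Let x_neq0 : x <> 0 := Rabs_ge3_neq0 x hx.

Lemma root2_exists : exists th, -3/4 <= th <= -1/2 /\ Fs x (approx2 x w th) = 0.
Proof.
  eapply root_of_certificates;
    [exact (Fs_approx2_lo x w x_neq0 hw) | exact (Fs_approx2_mid x w x_neq0 hw) | exact hx
    | lra | unfold approx2; reg | lra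
    | cbn [cert_r2_lo map]; coefficients_pos
    | cbn [cert_mid map]; coefficients_pos
    | discriminate | discriminate | reflexivity].
Qed.

Lemma root3_exists : exists th, 1/3 <= th <= 2/3 /\ Fs x (approx3 x th) = 0.
Proof.
  eapply root_of_certificates;
    [exact (Fs_approx3_lo x x_neq0) | exact (Fs_approx3_hi x x_neq0) | exact hx
    | lra | unfold approx3; reg | lra
    | cbn [cert_r3_lo]; coefficients_pos | cbn [cert_r3_hi]; coefficients_pos
    | discriminate | discriminate | reflexivity].
Qed.

Lemma root4_exists : exists th, -1/2 <= th <= -1/6 /\ Fs x (approx2 x (- w) th) = 0.
Proof.
  assert (hw' : - w * - w = 3) by lra.
  (* The certificate at [th = -1/2] is valid for both signs of [sqrt 3]; at [- sqrt 3]
     all its coefficients are negative. *)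
  assert (Elo : -1880739938304 * (x ^ 16 * Fs x (approx2 x (- w) (-1/2)))
                = bern (map Ropp (map (sqrt3_val (- w)) cert_mid)) (x + 3) (x - 3)).
  { rewrite bern_map_opp, <- (Fs_approx2_mid x (- w) x_neq0 hw'). ring. }
  eapply root_of_certificates;
    [exact Elo | exact (Fs_approx2_r4_hi x (- w) x_neq0 hw') | exact hx
    | lra | unfold approx2; reg | lra
    | cbn [cert_mid map]; coefficients_pos
    | cbn [cert_r4_hi map]; coefficients_pos
    | discriminate | discriminate | reflexivity].
Qed.

Lemma approx2_rest_bound (v th : R) : -7/4 <= v <= 7/4 -> -1 <= th <= 1 ->
  -1 <= (3 + v) / 6 - v / 9 * / x + th * (/ x) ^ 2 <= 1.
Proof.
  intros Hv Hth. pose proof (inv_bound x hx) as Hy. set (y := / x) in *.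
  assert (0 <= y ^ 2 <= 1/9) by nra.
  assert (-7/12 <= v * y <= 7/12) by nra.
  assert (-1/9 <= th * y ^ 2 <= 1/9) by nra.
  lra.
Qed.

Lemma approx3_rest_bound (th : R) : -1 <= th <= 1 -> -1 <= 1 / 2 - th * (/ x) ^ 2 <= 1.
Proof.
  intros Hth. pose proof (inv_bound x hx) as Hy. set (y := / x) in *.
  assert (0 <= y ^ 2 <= 1/9) by nra.
  assert (-1/9 <= th * y ^ 2 <= 1/9) by nra.
  lra.
Qed.

Lemma inv_x_neq0 : / x <> 0.
Proof. apply Rinv_neq_0_compat, x_neq0. Qed.

Lemma approx2_neq_approx3 (th th' : R) : -1 <= th <= 1 -> -1 <= th' <= 1 ->
  approx2 x w th <> approx3 x th'.
Proof.
  intros Hth Hth'. rewrite approx2_factor, approx3_factor by exact x_neq0.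
  apply scaled_neq; [exact inv_x_neq0 | exact (inv_bound x hx)
    | apply approx2_rest_bound; lra | apply approx3_rest_bound; lra | lra].
Qed.

Lemma approx3_neq_approx2_opp (th th' : R) : -1 <= th <= 1 -> -1 <= th' <= 1 ->
  approx3 x th <> approx2 x (- w) th'.
Proof.
  intros Hth Hth'. rewrite approx2_factor, approx3_factor by exact x_neq0.
  apply scaled_neq; [exact inv_x_neq0 | exact (inv_bound x hx)
    | apply approx3_rest_bound; lra | apply approx2_rest_bound; lra | lra].
Qed.

Lemma approx2_neq_approx2_opp (th th' : R) : -1 <= th <= 1 -> -1 <= th' <= 1 ->
  approx2 x w th <> approx2 x (- w) th'.
Proof.
  intros Hth Hth'. rewrite !approx2_factor by exact x_neq0.
  apply scaled_neq; [exact inv_x_neq0 | exact (inv_bound x hx)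
    | apply approx2_rest_bound; lra | apply approx2_rest_bound; lra | lra].
Qed.

End Roots.

Lemma quadratic_eq0_of_three_roots (a b c u v z : R) :
  u <> v -> u <> z -> v <> z ->
  a * u ^ 2 + b * u + c = 0 -> a * v ^ 2 + b * v + c = 0 -> a * z ^ 2 + b * z + c = 0 ->
  a = 0 /\ b = 0 /\ c = 0.
Proof.
  intros Huv Huz Hvz Hu Hv Hz.
  assert (Euv : a * (u + v) + b = 0).
  { apply (Rmult_eq_reg_l (u - v)); [|lra]. rewrite Rmult_0_r. nra. }
  assert (Euz : a * (u + z) + b = 0).
  { apply (Rmult_eq_reg_l (u - z)); [|lra]. rewrite Rmult_0_r. nra. }
  assert (Ha : a = 0).
  { apply (Rmult_eq_reg_l (v - z)); [|lra]. rewrite Rmult_0_r. nra. }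
  subst a. split; [reflexivity|]. split; nra.
Qed.

Lemma monic_quartic_factor (a b c d r2 r3 r4 : R) :
  r2 <> r3 -> r2 <> r4 -> r3 <> r4 ->
  r2 ^ 4 + a * r2 ^ 3 + b * r2 ^ 2 + c * r2 + d = 0 ->
  r3 ^ 4 + a * r3 ^ 3 + b * r3 ^ 2 + c * r3 + d = 0 ->
  r4 ^ 4 + a * r4 ^ 3 + b * r4 ^ 2 + c * r4 + d = 0 ->
  forall t, t ^ 4 + a * t ^ 3 + b * t ^ 2 + c * t + d
            = (t - (- a - r2 - r3 - r4)) * (t - r2) * (t - r3) * (t - r4).
Proof.
  intros H23 H24 H34 F2 F3 F4.
  set (r1 := - a - r2 - r3 - r4).
  set (e2 := r1 * (r2 + r3 + r4) + r2 * r3 + r2 * r4 + r3 * r4).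
  set (e3 := r1 * (r2 * r3 + r2 * r4 + r3 * r4) + r2 * r3 * r4).
  assert (Ediff : forall t, t ^ 4 + a * t ^ 3 + b * t ^ 2 + c * t + d
    - (t - r1) * (t - r2) * (t - r3) * (t - r4)
    = (b - e2) * t ^ 2 + (c + e3) * t + (d - r1 * r2 * r3 * r4))
    by (intros t; unfold e2, e3, r1; ring).
  assert (Hroot : forall r, r = r2 \/ r = r3 \/ r = r4 ->
    (b - e2) * r ^ 2 + (c + e3) * r + (d - r1 * r2 * r3 * r4) = 0).
  { intros r Hr. rewrite <- Ediff.
    destruct Hr as [-> | [-> | ->]]; [rewrite F2 | rewrite F3 | rewrite F4];
      unfold r1; ring. }
  destruct (quadratic_eq0_of_three_roots _ _ _ r2 r3 r4 H23 H24 H34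
              (Hroot r2 (or_introl eq_refl)) (Hroot r3 (or_intror (or_introl eq_refl)))
              (Hroot r4 (or_intror (or_intror eq_refl)))) as [Ha [Hb Hc]].
  intros t. apply Rminus_diag_uniq. rewrite Ediff, Ha, Hb, Hc. ring.
Qed.

Theorem mainTheorem3 (s : Z) (hs : (3 <= Z.abs s)%Z) :
  let x := IZR s in
  exists r1 r2 r3 r4 th1 th2 th3 th4 : R,
    (forall t : R, Fs x t = (t - r1) * (t - r2) * (t - r3) * (t - r4)) /\
    r1 = - 4 * x ^ 3 + 4 * x ^ 2 - 8 * x + 4 - 3 / 2 * / x - 3 / 2 * / x ^ 2
         + th1 * / x ^ 4 /\ 1 <= th1 <= 2 /\
    r2 = (1 + sqrt 3) / 2 * / x + (3 + sqrt 3) / 6 * / x ^ 2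
         - 1 / (3 * sqrt 3) * / x ^ 3 + th2 * / x ^ 4 /\ - 3 / 2 <= th2 <= - 1 / 2 /\
    r3 = 1 / 2 * / x + 1 / 2 * / x ^ 2 - th3 * / x ^ 4 /\ 0 <= th3 <= 1 /\
    r4 = (1 - sqrt 3) / 2 * / x + (3 - sqrt 3) / 6 * / x ^ 2
         + 1 / (3 * sqrt 3) * / x ^ 3 + th4 * / x ^ 4 /\ - 1 / 2 <= th4 <= 1 / 2.
Proof.
  intros x.
  assert (hx : 3 <= Rabs x) by (unfold x; rewrite <- abs_IZR; apply IZR_le; exact hs).
  set (w := sqrt 3).
  assert (hw : w * w = 3) by (apply sqrt_sqrt; lra).
  assert (hw0 : 0 <= w) by apply sqrt_pos.
  assert (hw_lo : 17320508 / 10000000 < w) by nra.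
  assert (hw_hi : w < 17320509 / 10000000) by nra.
  destruct (root2_exists x w hx hw hw_lo hw_hi) as [th2 [h2 F2]].
  destruct (root3_exists x hx) as [th3 [h3 F3]].
  destruct (root4_exists x w hx hw hw_lo hw_hi) as [th4 [h4 F4]].
  exists (- (4 * x ^ 3 - 4 * x ^ 2 + 8 * x - 4)
          - approx2 x w th2 - approx3 x th3 - approx2 x (- w) th4),
    (approx2 x w th2), (approx3 x th3), (approx2 x (- w) th4), (th3 - th2 - th4), th2, th3, th4.
  assert (Hw9 : 1 / (3 * w) = w / 9) by (field_simplify_eq; lra).
  repeat split; try lra.
  - intros t. apply monic_quartic_factor; auto;
      [ apply approx2_neq_approx3 | apply approx2_neq_approx2_opp | apply approx3_neq_approx2_opp ];
      auto; lra.
  - unfold approx2, approx3. field. exact (Rabs_ge3_neq0 x hx).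
  - unfold approx2. rewrite Hw9. reflexivity.
  - unfold approx2. rewrite Hw9. field. exact (Rabs_ge3_neq0 x hx).
Qed.
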